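(* Let $Q$ be a symmetric Leibniz algebra, $L$ a dense subalgebra of $Q$, and suppose $Q$ is a multiplicatively semiprime algebra of quotients of $L$. Then for every essential ideal $I$ of $L$, $\mathrm{lan}_{\mathscr{A}(Q)}(\tilde{I})=\{0\}$.
   Context: A symmetric Leibniz algebra satisfies both $[x,[y,z]]=[[x,y],z]-[[x,z],y]$ and $[x,[y,z]]=[[x,y],z]+[y,[x,z]]$. For $x\in Q$, $R_x(u)=[u,x]$, $L_x(u)=[x,u]$. $\mathscr{A}(Q)$ is the associative subalgebra of $\mathrm{End}(Q)$ generated by all $R_x,L_x$; for $X\subseteq Q$, $\mathscr{A}_Q(X)$ is the subalgebra of $\mathscr{A}(Q)$ generated by $R_x,L_x$, $x\in X$. For an ideal $I$ of $L$, $\tilde I$ is the two-sided ideal of $\mathscr{A}_Q(L)$ generated by $\mathscr{A}_Q(I)$, and $\mathrm{lan}_{\mathscr{A}(Q)}(\tilde I)=\{\mu\in\mathscr{A}(Q):\mu\nu=0\ \forall\nu\in\tilde I\}$. $M(Q)$ is the associative algebra generated by the identity and all $R_x,L_x$; $L$ is dense in $Q$ if the only $\mu\in M(Q)$ with $\mu(L)=\{0\}$ is $0$. $Q$ is multiplicatively semiprime if $Q$ is semiprime ($[J,J]\ne0$ for nonzero ideals $J$) and $M(Q)$ is semiprime (no nonzero ideal of zero square). An ideal of $L$ is essential if it meets every nonzero ideal nontrivially. With ${}_L(q)=\mathbb{F}q+\{\sum\xi_i(q):\xi_i\in\mathscr{A}_Q(L)\}$ and $(L:q)=\{x\in L:[x,{}_L(q)]\subseteq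 L,[{}_L(q),x]\subseteq L\}$, $Q$ is an algebra of quotients of $L$ if for all $p,q\in Q$, $p\ne0$, there is $x\in(L:q)$ with $[x,p]\ne0$ or $y\in(L:q)$ with $[p,y]\ne0$. *)

From HB Require Import structures.
From mathcomp Require Import all_boot all_algebra.
Set Implicit Arguments. Unset Strict Implicit. Unset Printing Implicit Defensive.
Import GRing.Theory.
Local Open Scope ring_scope.

Section LeibnizDefs.
Variables (F : fieldType) (V : lmodType F).

Definition bilinear_br (br : V -> V -> V) : Prop :=
  (forall a x y z, br (a *: x + y) z = a *: br x z + br y z) /\
  (forall a x y z, br z (a *: x + y) = a *: br z x + br z y).

Definition symmetric_leibniz (br : V -> V -> V) : Prop :=
  bilinear_br br /\
  (forall x y z, br x (br y z) = br (br x y) z - br (br x z) y) /\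
  (forall x y z, br x (br y z) = br (br x y) z + br y (br x z)).

Definition Rop (br : V -> V -> V) (x : V) : V -> V := fun u => br u x.
Definition Lop (br : V -> V -> V) (x : V) : V -> V := fun u => br x u.

Definition zero_map : V -> V := fun _ => 0.

Definition subspace (P : V -> Prop) : Prop :=
  P 0 /\ forall a x y, P x -> P y -> P (a *: x + y).

Definition subalgebra (br : V -> V -> V) (L : V -> Prop) : Prop :=
  subspace L /\ forall x y, L x -> L y -> L (br x y).

Definition ideal_of (br : V -> V -> V) (L I : V -> Prop) : Prop :=
  subspace I /\ (forall x, I x -> L x) /\
  (forall x y, L x -> I y -> I (br x y)) /\
  (forall x y, I x -> L y -> I (br x y)).

Definition nonzero_set (P : V -> Prop) : Prop := exists x, P x /\ x <> 0.

Definition essential_ideal (br : V -> V -> V) (L I : V -> Prop) : Prop :=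
  ideal_of br L I /\
  forall J, ideal_of br L J -> nonzero_set J -> exists x, I x /\ J x /\ x <> 0.

Inductive gen_alg (G : (V -> V) -> Prop) : (V -> V) -> Prop :=
  | ga_gen f : G f -> gen_alg G f
  | ga_zero : gen_alg G zero_map
  | ga_add f g : gen_alg G f -> gen_alg G g -> gen_alg G (fun u => f u + g u)
  | ga_scale a f : gen_alg G f -> gen_alg G (fun u => a *: f u)
  | ga_comp f g : gen_alg G f -> gen_alg G g -> gen_alg G (fun u => f (g u)).

Inductive gen_ualg (G : (V -> V) -> Prop) : (V -> V) -> Prop :=
  | gu_gen f : G f -> gen_ualg G f
  | gu_id : gen_ualg G (fun u => u)
  | gu_zero : gen_ualg G zero_map
  | gu_add f g : gen_ualg G f -> gen_ualg G g -> gen_ualg G (fun u => f u + g u)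
  | gu_scale a f : gen_ualg G f -> gen_ualg G (fun u => a *: f u)
  | gu_comp f g : gen_ualg G f -> gen_ualg G g -> gen_ualg G (fun u => f (g u)).

Definition mult_gens (br : V -> V -> V) (X : V -> Prop) (f : V -> V) : Prop :=
  exists x, X x /\ (f = Rop br x \/ f = Lop br x).

Definition AQ (br : V -> V -> V) (X : V -> Prop) : (V -> V) -> Prop :=
  gen_alg (mult_gens br X).
Definition AofQ (br : V -> V -> V) : (V -> V) -> Prop := AQ br (fun _ => True).

Definition MofQ (br : V -> V -> V) : (V -> V) -> Prop :=
  gen_ualg (mult_gens br (fun _ => True)).

Inductive tilde_ideal (br : V -> V -> V) (L I : V -> Prop) : (V -> V) -> Prop :=
  | ti_gen f : AQ br I f -> tilde_ideal br L I f
  | ti_zero : tilde_ideal br L I zero_map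
  | ti_add f g : tilde_ideal br L I f -> tilde_ideal br L I g ->
      tilde_ideal br L I (fun u => f u + g u)
  | ti_scale a f : tilde_ideal br L I f -> tilde_ideal br L I (fun u => a *: f u)
  | ti_lmul m f : AQ br L m -> tilde_ideal br L I f ->
      tilde_ideal br L I (fun u => m (f u))
  | ti_rmul f m : tilde_ideal br L I f -> AQ br L m ->
      tilde_ideal br L I (fun u => f (m u)).

Definition lan (br : V -> V -> V) (L I : V -> Prop) (mu : V -> V) : Prop :=
  AofQ br mu /\ forall nu, tilde_ideal br L I nu -> forall u, mu (nu u) = 0.

Definition dense (br : V -> V -> V) (L : V -> Prop) : Prop :=
  forall mu, MofQ br mu -> (forall x, L x -> mu x = 0) -> mu = zero_map.

Definition semiprime (br : V -> V -> V) : Prop :=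
  forall J, ideal_of br (fun _ => True) J -> nonzero_set J ->
    exists x y, J x /\ J y /\ br x y <> 0.

Definition MQ_ideal (br : V -> V -> V) (K : (V -> V) -> Prop) : Prop :=
  (forall k, K k -> MofQ br k) /\ K zero_map /\
  (forall f g, K f -> K g -> K (fun u => f u + g u)) /\
  (forall a f, K f -> K (fun u => a *: f u)) /\
  (forall m k, MofQ br m -> K k -> K (fun u => m (k u))) /\
  (forall k m, K k -> MofQ br m -> K (fun u => k (m u))).

Definition MQ_semiprime (br : V -> V -> V) : Prop :=
  forall K, MQ_ideal br K ->
    (forall f g, K f -> K g -> forall u, f (g u) = 0) ->
    forall k, K k -> k = zero_map.

Definition mult_semiprime (br : V -> V -> V) : Prop :=
  semiprime br /\ MQ_semiprime br.

Definition Lq (br : V -> V -> V) (L : V -> Prop) (q u : V) : Prop :=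
  exists (a : F) (n : nat) (xi : nat -> V -> V), (forall i, (i < n)%N -> AQ br L (xi i)) /\
    u = a *: q + \sum_(i < n) xi i q.

Definition Lcolon (br : V -> V -> V) (L : V -> Prop) (q x : V) : Prop :=
  L x /\ forall u, Lq br L q u -> L (br x u) /\ L (br u x).

Definition algebra_of_quotients (br : V -> V -> V) (L : V -> Prop) : Prop :=
  forall p q, p <> 0 ->
    (exists x, Lcolon br L q x /\ br x p <> 0) \/
    (exists y, Lcolon br L q y /\ br p y <> 0).

End LeibnizDefs.
Arguments zero_map {F V} _.

From mathcomp Require Import all_boot all_algebra.
From Stdlib Require Import Classical FunctionalExtensionality.
Import GRing.Theory.
Local Open Scope ring_scope.
Set Implicit Arguments.
Unset Strict Implicit.

(* Let K be the common kernel of all mu in lan(I~).  Density of L makes K an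
   ideal of Q, and semiprimeness of M(Q) forces every multiplication operator
   that maps Q into K and kills K to vanish.  Hence each mu(u) annihilates K,
   and if some mu(u) <> 0 the annihilator of K is a nonzero ideal of Q, which
   meets L and then, by essentiality, I in some v <> 0.  Since R_v and L_v lie
   in I~, they map Q into K while killing K, so v annihilates Q, contradicting
   the semiprimeness of Q. *)

Section Subspace.
Variables (F : fieldType) (V : lmodType F) (P : V -> Prop).
Hypothesis P_subspace : subspace P.

Lemma subspaceD x y : P x -> P y -> P (x + y).
Proof. by move=> Px Py; rewrite -[x]scale1r; apply: (proj2 P_subspace). Qed.

Lemma subspaceZ a x : P x -> P (a *: x).
Proof. by move=> Px; rewrite -[_ *: _]addr0; apply: (proj2 P_subspace) (proj1 P_subspace). Qed.

End Subspace.

Lemma linear_fun0 (F : fieldType) (V : lmodType F) (f : V -> V) :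
  linear f -> f 0 = 0.
Proof. by move=> f_lin; have := zmod_morphism_linear f_lin 0 0; rewrite !subrr. Qed.

Section GeneratedAlgebras.
Variables (F : fieldType) (V : lmodType F) (G : (V -> V) -> Prop).

Lemma gen_alg_ualg f : gen_alg G f -> gen_ualg G f.
Proof.
elim=> {f} [f /gu_gen //||f g _ Hf _ Hg|a f _ Hf|f g _ Hf _ Hg].
- exact: gu_zero.
- exact: gu_add.
- exact: gu_scale.
- exact: gu_comp.
Qed.

Lemma gen_alg_sub (H : (V -> V) -> Prop) f :
  (forall g, G g -> H g) -> gen_alg G f -> gen_alg H f.
Proof.
move=> GH; elim=> {f} [f /GH/ga_gen //||f g _ Hf _ Hg|a f _ Hf|f g _ Hf _ Hg].
- exact: ga_zero.
- exact: ga_add.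
- exact: ga_scale.
- exact: ga_comp.
Qed.

Lemma gen_ualg_linear f :
  (forall g, G g -> linear g) -> gen_ualg G f -> linear f.
Proof.
move=> G_lin; elim=> {f} [f /G_lin //|//|a x y|f g _ Hf _ Hg a x y|b f _ Hf a x y|
                           f g _ Hf _ Hg a x y] /=.
- by rewrite /zero_map scaler0 addr0.
- by rewrite Hf Hg scalerDr addrACA.
- by rewrite Hf scalerDr !scalerA mulrC.
- by rewrite Hg Hf.
Qed.

End GeneratedAlgebras.

Section Multiplications.
Variables (F : fieldType) (V : lmodType F) (br : V -> V -> V).

Definition annihilator (T : V -> Prop) (p : V) : Prop :=
  forall s, T s -> br s p = 0 /\ br p s = 0.

Lemma AQ_Rop (X : V -> Prop) x : X x -> AQ br X (Rop br x).
Proof. by move=> Xx; apply: ga_gen; exists x; split; [|left]. Qed.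

Lemma AQ_Lop (X : V -> Prop) x : X x -> AQ br X (Lop br x).
Proof. by move=> Xx; apply: ga_gen; exists x; split; [|right]. Qed.

Lemma MofQ_Rop x : MofQ br (Rop br x).
Proof. by apply: gu_gen; exists x; split; [|left]. Qed.

Lemma MofQ_Lop x : MofQ br (Lop br x).
Proof. by apply: gu_gen; exists x; split; [|right]. Qed.

Lemma AQ_sub (X Y : V -> Prop) f :
  (forall x, X x -> Y x) -> AQ br X f -> AQ br Y f.
Proof.
by move=> XY; apply: gen_alg_sub => g [x [/XY Yx g_def]]; exists x.
Qed.

Lemma AofQ_MofQ f : AofQ br f -> MofQ br f.
Proof. exact: gen_alg_ualg. Qed.

Lemma ideal_subalgebra_meet (L J : V -> Prop) :
  subalgebra br L -> ideal_of br (fun _ => True) J ->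
  ideal_of br L (fun x => L x /\ J x).
Proof.
move=> [[L0 L_lin] L_br] [[J0 J_lin] [_ [J_brl J_brr]]].
split; first by split=> [|a x y [Lx Jx] [Ly Jy]]; split; auto.
split; first by move=> x [].
by split=> x y; [move=> Lx [Ly Jy] | move=> [Lx Jx] Ly]; split; auto.
Qed.

Lemma quotients_ideal_meet (L J : V -> Prop) :
  algebra_of_quotients br L -> ideal_of br (fun _ => True) J ->
  nonzero_set J -> nonzero_set (fun x => L x /\ J x).
Proof.
move=> quot [_ [_ [J_brl J_brr]]] [q [Jq q_neq0]].
have q_Lq : Lq br L q q.
  exists 1, 0%N, (fun _ => zero_map); split; first by move=> i; rewrite ltn0.
  by rewrite big_ord0 scale1r addr0.
case: (quot q q q_neq0) => [[x [[_ colon] nz]] | [y [[_ colon] nz]]].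
- by exists (br x q); split; [split; [exact: (proj1 (colon _ q_Lq))|exact: J_brl]|].
- by exists (br q y); split; [split; [exact: (proj2 (colon _ q_Lq))|exact: J_brr]|].
Qed.

Section Bilinear.
Hypothesis br_bilinear : bilinear_br br.

Lemma br_linearl z : linear (br^~ z).
Proof. by move=> a x y; apply: (proj1 br_bilinear). Qed.

Lemma br_linearr z : linear (br z).
Proof. by move=> a x y; apply: (proj2 br_bilinear). Qed.

Lemma br0l z : br 0 z = 0.
Proof. exact: linear_fun0 (br_linearl z). Qed.

Lemma br0r z : br z 0 = 0.
Proof. exact: linear_fun0 (br_linearr z). Qed.

Lemma brZl a x z : br (a *: x) z = a *: br x z.
Proof. exact: scalable_linear (br_linearl z) a x. Qed.

Lemma brZr a x z : br z (a *: x) = a *: br z x.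
Proof. exact: scalable_linear (br_linearr z) a x. Qed.

Lemma MofQ_linear f : MofQ br f -> linear f.
Proof.
apply: gen_ualg_linear => g [x [_ [->|->]]]; [exact: br_linearl|exact: br_linearr].
Qed.

Lemma MofQ0 f : MofQ br f -> f 0 = 0.
Proof. by move/MofQ_linear/linear_fun0. Qed.

Lemma semiprime_annihilatorT v :
  semiprime br -> annihilator (fun _ => True) v -> v = 0.
Proof.
move=> Q_sp v_ann; apply: NNPP => v_neq0.
pose J w := exists c : F, w = c *: v.
have J_ann x w : J w -> br x w = 0 /\ br w x = 0.
  by move=> [d ->]; rewrite brZl brZr; have [-> ->] := v_ann x I; rewrite scaler0.
have J0 : J 0 by exists 0; rewrite scale0r.
have J_ideal : ideal_of br (fun _ => True) J.
  split; first split=> // a x y [c ->] [d ->].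
    by exists (a * c + d); rewrite scalerDl scalerA.
  split=> //; split=> x y; first by move=> _ /(J_ann x) [-> _].
  by move=> /(J_ann y) [_ ->].
have [x [y [_ [Jy nz]]]] : exists x y, J x /\ J y /\ br x y <> 0.
  by apply: Q_sp => //; exists v; split=> //; exists 1; rewrite scale1r.
exact: nz (proj1 (J_ann x y Jy)).
Qed.

Section Ideal.
Variable T : V -> Prop.
Hypothesis T_ideal : ideal_of br (fun _ => True) T.

Lemma ideal_MofQ_stable m w : MofQ br m -> T w -> T (m w).
Proof.
have [T_sub [_ [T_brl T_brr]]] := T_ideal.
move=> Mm; elim: Mm w => {m} [m [x [_ [->|->]]]|//|w _|m n _ IHm _ IHn w Tw|
                              a m _ IHm w Tw|m n _ IHm _ IHn w Tw] /=.
- by move=> w Tw; apply: T_brr.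
- by move=> w Tw; apply: T_brl.
- exact: (proj1 T_sub).
- by apply: subspaceD; auto.
- by apply: subspaceZ; auto.
- exact: IHm (IHn _ Tw).
Qed.

Definition range_ker (k : V -> V) : Prop :=
  MofQ br k /\ (forall u, T (k u)) /\ (forall s, T s -> k s = 0).

Lemma range_ker_MQ_ideal : MQ_ideal br range_ker.
Proof.
have T_sub := proj1 T_ideal.
split; first by move=> k [].
split; first by split; [exact: gu_zero | split=> // u; exact: (proj1 T_sub)].
split.
  move=> f g [Mf [Tf kf]] [Mg [Tg kg]]; split; first exact: gu_add.
  by split=> [u|s Ts]; [apply: subspaceD | rewrite kf // kg // addr0].
split.
  move=> a f [Mf [Tf kf]]; split; first exact: gu_scale.
  by split=> [u|s Ts]; [apply: subspaceZ | rewrite kf // scaler0].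
split.
  move=> m k Mm [Mk [Tk kk]]; split; first exact: gu_comp.
  by split=> [u|s Ts]; [apply: ideal_MofQ_stable | rewrite /= kk // MofQ0].
move=> k m [Mk [Tk kk]] Mm; split; first exact: gu_comp.
by split=> [u|s Ts] //=; rewrite kk //; apply: ideal_MofQ_stable.
Qed.

Hypothesis MQ_sp : MQ_semiprime br.

(* The operators mapping Q into T and killing T form an ideal of M(Q) of zero square. *)
Lemma MofQ_range_ker_eq0 f :
  MofQ br f -> (forall u, T (f u)) -> (forall s, T s -> f s = 0) -> f = zero_map.
Proof.
move=> Mf Tf kf; apply: (MQ_sp range_ker_MQ_ideal) => //.
by move=> g h [_ [_ kg]] [_ [Th _]] u; apply: kg.
Qed.

Lemma MofQ_range_annihilator f u :
  MofQ br f -> (forall s, T s -> f s = 0) -> annihilator T (f u).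
Proof.
have [_ [_ [T_brl T_brr]]] := T_ideal.
move=> Mf kf s Ts.
have gf0 g : MofQ br g -> (forall v, T (g v)) -> g 0 = 0 -> g (f u) = 0.
  move=> Mg Tg g0; have gf_kills t : T t -> g (f t) = 0 by move/kf ->.
  have := MofQ_range_ker_eq0 (gu_comp Mg Mf) (fun v => Tg (f v)) gf_kills.
  by move/(congr1 (@^~ u)).
split; [apply: (gf0 (Lop br s)) | apply: (gf0 (Rop br s))].
- exact: MofQ_Lop.
- by move=> v; apply: T_brr.
- exact: br0r.
- exact: MofQ_Rop.
- by move=> v; apply: T_brl.
- exact: br0l.
Qed.

Lemma annihilator_multiplier_eq0 v :
  semiprime br -> annihilator T v -> (forall w, T (br w v) /\ T (br v w)) -> v = 0.
Proof.
move=> Q_sp v_ann Tv; apply: semiprime_annihilatorT => // w _.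
have R0 : Rop br v = zero_map.
  by apply: MofQ_range_ker_eq0 (MofQ_Rop v) _ _ => [u|s /v_ann []]; [case: (Tv u)|].
have L0 : Lop br v = zero_map.
  by apply: MofQ_range_ker_eq0 (MofQ_Lop v) _ _ => [u|s /v_ann []]; [case: (Tv u)|].
by split; [move/(congr1 (@^~ w)): R0 | move/(congr1 (@^~ w)): L0].
Qed.

End Ideal.

(* Each Leibniz identity expands a bracket of s in T with [z, v] or [v, z]
   into brackets of v with s, [s, z] or [z, s], all of which lie in T. *)
Lemma annihilator_ideal T :
  (forall x y z, br x (br y z) = br (br x y) z - br (br x z) y) ->
  (forall x y z, br x (br y z) = br (br x y) z + br y (br x z)) ->
  ideal_of br (fun _ => True) T -> ideal_of br (fun _ => True) (annihilator T).
Proof.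
move=> leib_r leib_l [_ [_ [T_brl T_brr]]].
split.
  split=> [s _|a x y x_ann y_ann s Ts]; first by rewrite br0l br0r.
  have [sx xs] := x_ann s Ts; have [sy ys] := y_ann s Ts.
  by rewrite (proj1 br_bilinear) (proj2 br_bilinear) sx xs sy ys scaler0 addr0.
split=> //; split=> [z v _ v_ann | v z v_ann _] s Ts; split.
- by rewrite leib_l (proj1 (v_ann _ (T_brr s z Ts I))) (proj1 (v_ann _ Ts)) br0r addr0.
- have := leib_r z v s.
  by rewrite (proj2 (v_ann _ Ts)) br0r (proj1 (v_ann _ (T_brl z s I Ts))) subr0.
- by rewrite leib_l (proj1 (v_ann _ Ts)) br0l (proj2 (v_ann _ (T_brr s z Ts I))) addr0.
- have := leib_r v z s.
  by rewrite (proj2 (v_ann _ (T_brl z s I Ts))) (proj2 (v_ann _ Ts)) br0l subr0.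
Qed.

End Bilinear.
End Multiplications.

Section LanKernel.
Variables (F : fieldType) (V : lmodType F) (br : V -> V -> V) (L I : V -> Prop).
Hypothesis br_bilinear : bilinear_br br.
Hypothesis L_dense : dense br L.

Definition lan_kernel (v : V) : Prop := forall mu, lan br L I mu -> mu v = 0.

Lemma lan_comp_AQ mu m : AQ br L m -> lan br L I mu -> lan br L I (fun u => mu (m u)).
Proof.
move=> Am [A_mu mu_kills]; split; first exact: ga_comp A_mu (AQ_sub _ Am).
by move=> nu Inu u; apply: (mu_kills _ (ti_lmul Am Inu)).
Qed.

(* mu o L_w lies in M(Q) and vanishes on L, because mu o R_x is again in lan(I~) for x in L. *)
Lemma lan_kernel_brl w z : lan_kernel w -> lan_kernel (br w z).
Proof.
move=> Kw mu lan_mu.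
suff /(congr1 (@^~ z)) : (fun u => mu (br w u)) = zero_map by [].
apply: L_dense => [|x Lx]; first exact: gu_comp (AofQ_MofQ (proj1 lan_mu)) (MofQ_Lop _ w).
exact: (Kw _ (lan_comp_AQ (AQ_Rop br Lx) lan_mu)).
Qed.

Lemma lan_kernel_brr w z : lan_kernel w -> lan_kernel (br z w).
Proof.
move=> Kw mu lan_mu.
suff /(congr1 (@^~ z)) : (fun u => mu (br u w)) = zero_map by [].
apply: L_dense => [|x Lx]; first exact: gu_comp (AofQ_MofQ (proj1 lan_mu)) (MofQ_Rop _ w).
exact: (Kw _ (lan_comp_AQ (AQ_Lop br Lx) lan_mu)).
Qed.

Lemma lan_kernel_ideal : ideal_of br (fun _ => True) lan_kernel.
Proof.
split; last by split=> //; split=> x y *; [apply: lan_kernel_brr | apply: lan_kernel_brl].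
split=> [mu /proj1/AofQ_MofQ/(MofQ0 br_bilinear) //|a x y Kx Ky mu lan_mu].
by rewrite (MofQ_linear br_bilinear (AofQ_MofQ (proj1 lan_mu))) Kx // Ky // scaler0 addr0.
Qed.

Lemma lan_kernel_multiplier v w :
  I v -> lan_kernel (br w v) /\ lan_kernel (br v w).
Proof.
move=> Iv; split=> mu [_ mu_kills].
- exact: (mu_kills _ (ti_gen _ (AQ_Rop br Iv)) w).
- exact: (mu_kills _ (ti_gen _ (AQ_Lop br Iv)) w).
Qed.

End LanKernel.

Theorem corollary6p7 (F : fieldType) (V : lmodType F) (br : V -> V -> V)
  (L : V -> Prop) :
  symmetric_leibniz br ->
  subalgebra br L ->
  dense br L ->
  mult_semiprime br ->
  algebra_of_quotients br L ->
  forall I : V -> Prop, essential_ideal br L I ->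
  forall mu : V -> V, lan br L I mu -> mu = zero_map.
Proof.
move=> [br_bil [leib_r leib_l]] L_sub L_dense [Q_sp MQ_sp] quot I [_ I_ess] mu lan_mu.
have K_ideal := lan_kernel_ideal I br_bil L_dense.
have AnnK_ideal := annihilator_ideal br_bil leib_r leib_l K_ideal.
apply: functional_extensionality => u; apply: NNPP => mu_u_neq0.
have mu_u_ann := MofQ_range_annihilator br_bil K_ideal MQ_sp u
  (AofQ_MofQ (proj1 lan_mu)) (fun s Ks => Ks mu lan_mu).
have [p [Hp p_neq0]] := quotients_ideal_meet quot AnnK_ideal
  (ex_intro _ (mu u) (conj mu_u_ann mu_u_neq0)).
have [v [Iv [[_ v_ann] v_neq0]]] := I_ess _ (ideal_subalgebra_meet L_sub AnnK_ideal)
  (ex_intro _ p (conj Hp p_neq0)).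
apply/v_neq0/(annihilator_multiplier_eq0 br_bil K_ideal MQ_sp Q_sp v_ann) => w.
exact: lan_kernel_multiplier.
Qed.
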